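(* A twisted graph $T=(\vec G,G,\prec,A)$ which has a positive sequence on $F$ is simplicial (on $F$).
   Context: Signed sets on a finite set $E$: pairs $X=(X^+,X^-)$ of disjoint subsets, $X(e)=+1,-1,0$ according as $e\in X^+$, $e\in X^-$, or neither; support $\underline X=X^+\cup X^-$. Conformal: no $e$ with $X(e)=-Y(e)\ne0$; composition $(X\circ Y)(e)=X(e)$ if $X(e)\ne0$, else $Y(e)$. For a total order $<$ on $E$, $\mathcal C(<)=\{(\{e_1,e_3\},\{e_2\}),(\{e_2\},\{e_1,e_3\}):e_1<e_2<e_3\}$ (circuits of the rank 2 oriented matroid $\mathcal M(<)$; vectors are compositions of pairwise conformal families of circuits); for a partial order $\prec$, $\mathcal C(\prec)=\bigcap_{<\supseteq\prec}\mathcal C(<)$. For a directed graph $\vec G=(V,\vec E)$ (no loops, parallel or antiparallel edges), underlying simple graph $G=(V,E)$, a strong map $\mathcal M^*(\vec G)\to\mathcal M(<)$ means every signed minimal cut $(\{(u,w):u\in S,w\notin S\},\{(u,w):w\in S,u\notin S\})$ ($S$, $V\setminus S$ inducing connected subgraphs) is a vector of $\mathcal M(<)$; $C^*_v=(\{(u,v)\in\vec E\},\{(v,u)\in\vec E\})$. A twisted graph $T=(\vec G,G,\prec,A)$: $\prec$ a partial order on $E$, $G$ three-edge-connected, $A\subset\mathcal C(\prec)$, a strong map $\mathcal M^*(\vec G)\to\mathcal M(<)$ for every total $<\supseteq\prec$, and a partition $A=\bigsqcup_v A_v$ with members of $A_v$ pairwise conformal and composing to $C^*_v$. $\boldsymbol\theta\in\mathbb{R}^E$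 respects $\prec$ if $0<\theta_e<180$ (degrees) and $\theta_e<\theta_f$ whenever $e\prec f$. $\Sigma(T)$ is the $|A|\times|E|$ matrix with $\Sigma_{a,e}=0$ if $e\notin\underline a$ and $\Sigma_{a,e}=a(e)\sin(\theta_{e''}-\theta_{e'})$ if $\underline a=\{e,e',e''\}$ with $e'\prec e''$. A matrix with $r+1$ rows and $r$ columns is a simplex if its rows have a linear dependency with all coefficients positive and every row dependency is a multiple of it. $T$ is simplicial on $F$ if for every $\boldsymbol\theta$ respecting $\prec$ the submatrix of $\Sigma(T)$ on columns $F$ is a simplex. A positive sequence for $T$ on $F$ is an enumeration $A=\{a_1,\dots,a_m\}$ ($m=|A|$) and an enumeration $F=\{f_2,\dots,f_m\}\subset E$ of distinct edges such that for each $2\le j\le m$: $a_j(f_j)\ne0$; $a_i(f_j)=0$ for all $i>j$; and $a_i(f_j)\in\{0,-a_j(f_j)\}$ for all $i<j$. *)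

From HB Require Import structures.
From mathcomp Require Import all_boot all_order all_algebra.
From mathcomp Require Import reals trigo.
Set Implicit Arguments. Unset Strict Implicit. Unset Printing Implicit Defensive.
Import Order.TTheory GRing.Theory Num.Theory.
Local Open Scope ring_scope.

(** * Signed sets on a finite set E: pairs (X^+, X^-) *)
Definition signed (E : finType) := ({set E} * {set E})%type.

Section Signed.
Variable E : finType.
Implicit Types X Y : signed E.

Definition sval X (e : E) : int :=
  if e \in X.1 then 1 else if e \in X.2 then -1 else 0.

Definition supp X : {set E} := X.1 :|: X.2.

Definition conformal X Y : bool :=
  [disjoint X.1 & Y.2] && [disjoint X.2 & Y.1].

(** composition: (X o Y)(e) = X(e) if X(e) <> 0, else Y(e) *)
Definition compose X Y : signed E :=
  (X.1 :|: (Y.1 :\: X.2), X.2 :|: (Y.2 :\: X.1)).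

Definition zero_signed : signed E := (set0, set0).

Definition compose_seq (s : seq (signed E)) : signed E :=
  foldr compose zero_signed s.

Definition strict_partial_order (r : rel E) : Prop :=
  (forall e, ~~ r e e) /\ (forall e f g, r e f -> r f g -> r e g).

Definition strict_total_order (r : rel E) : Prop :=
  strict_partial_order r /\ (forall e f, e != f -> r e f || r f e).

Definition extends (lt prec : rel E) : Prop := forall e f, prec e f -> lt e f.

(** circuits C(<) of the rank 2 oriented matroid M(<) *)
Definition circuit_tot (lt : rel E) X : Prop :=
  exists e1 e2 e3, [/\ lt e1 e2, lt e2 e3 &
    (X = ([set e1; e3], [set e2]) \/ X = ([set e2], [set e1; e3]))].

Definition vector_tot (lt : rel E) X : Prop :=
  exists s : seq (signed E),
    [/\ forall Y, Y \in s -> circuit_tot lt Y, pairwise conformal s &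
        compose_seq s = X].

Definition circuit_po (prec : rel E) X : Prop :=
  forall lt : rel E, strict_total_order lt -> extends lt prec -> circuit_tot lt X.

End Signed.

Section Graph.
Variables (V E : finType) (src dst : E -> V).

Definition simple_digraph : Prop :=
  (forall e, src e != dst e) /\
  (forall e f, [set src e; dst e] = [set src f; dst f] -> e = f).

Definition adj_in (D : {set E}) (S : {set V}) : rel V :=
  fun u w => [&& u \in S, w \in S &
    [exists e in D, ((src e == u) && (dst e == w)) || ((src e == w) && (dst e == u))]].

Definition induces_connected (S : {set V}) : Prop :=
  S != set0 /\ forall u w, u \in S -> w \in S -> connect (adj_in setT S) u w.

Definition three_edge_connected : Prop :=
  forall D : {set E}, (#|D| < 3)%N ->
    forall u w, connect (adj_in (~: D) setT) u w.

Definition signed_cut (S : {set V}) : signed E :=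
  ([set e | (src e \in S) && (dst e \notin S)],
   [set e | (dst e \in S) && (src e \notin S)]).

(** strong map M^*(vec G) -> M(<) : every signed minimal cut is a vector *)
Definition strong_map (lt : rel E) : Prop :=
  forall S : {set V}, induces_connected S -> induces_connected (~: S) ->
    vector_tot lt (signed_cut S).

Definition Cstar (v : V) : signed E :=
  ([set e | dst e == v], [set e | src e == v]).

Definition vertex_partition (A : {set signed E}) : Prop :=
  exists part : signed E -> V, forall v : V,
    let Av := [set a in A | part a == v] in
    (forall x y, x \in Av -> y \in Av -> x != y -> conformal x y) /\
    compose_seq (enum Av) = Cstar v.

Definition twisted_graph (prec : rel E) (A : {set signed E}) : Prop :=
  [/\ simple_digraph /\ strict_partial_order prec,
      three_edge_connected,
      (forall a, a \in A -> circuit_po prec a),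
      (forall lt, strict_total_order lt -> extends lt prec -> strong_map lt) &
      vertex_partition A].

End Graph.

Section Sigma.
Variables (R : realType) (E : finType) (prec : rel E) (A : {set signed E}).

(** theta respects prec (angles in degrees) *)
Definition respects (theta : E -> R) : Prop :=
  (forall e, 0 < theta e < 180) /\ (forall e f, prec e f -> theta e < theta f).

Definition sin_deg (x : R) : R := sin (x * pi / 180).

Definition Sigma_entry (theta : E -> R) (a : signed E) (e : E) : R :=
  if e \notin supp a then 0 else
  match [pick p : E * E | (supp a == [set e; p.1; p.2]) && prec p.1 p.2] with
  | Some p => (sval a e)%:~R * sin_deg (theta p.2 - theta p.1)
  | None => 0
  end.

Definition Sigma (theta : E -> R) : 'M[R]_(#|A|, #|E|) :=
  \matrix_(i < #|A|, j < #|E|) Sigma_entry theta (enum_val i) (enum_val j).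

Definition Sigma_on (theta : E -> R) (F : {set E}) : 'M[R]_(#|A|, #|F|) :=
  colsub (fun j : 'I_#|F| => enum_rank (enum_val j)) (Sigma theta).

End Sigma.

Definition simplex (R : realType) (m n : nat) (M : 'M[R]_(m, n)) : Prop :=
  m = n.+1 /\
  exists2 c : 'rV[R]_m, (forall i, 0 < c 0 i) /\ c *m M = 0 &
    forall d : 'rV[R]_m, d *m M = 0 -> exists k : R, d = k *: c.

Definition simplicial (R : realType) (E : finType) (prec : rel E)
    (A : {set signed E}) (F : {set E}) : Prop :=
  forall theta : E -> R, respects prec theta -> simplex (Sigma_on prec A theta F).

(** positive sequence: A = {a_1,...,a_{n+1}} (here a : 'I_n.+1, a_1 = a ord0),
    F = {f_2,...,f_{n+1}} (here f : 'I_n, f j is paired with a (lift ord0 j)) *)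
Definition positive_sequence (E : finType) (A : {set signed E}) (F : {set E}) : Prop :=
  exists n (a : 'I_n.+1 -> signed E) (f : 'I_n -> E),
    [/\ injective a, A = [set a i | i in 'I_n.+1],
        injective f, F = [set f j | j in 'I_n] &
        forall j : 'I_n, let J := lift ord0 j in
        [/\ sval (a J) (f j) != 0,
            forall i : 'I_n.+1, (J < i)%N -> sval (a i) (f j) = 0 &
            forall i : 'I_n.+1, (i < J)%N ->
              sval (a i) (f j) \in [:: 0; - sval (a J) (f j)]]].

(* Every circuit in C(≺) is a ≺-chain x ≺ m ≺ y with m of the odd sign, so each
   entry of Σ(T) is its sign times a positive sine. A positive sequence puts the
   columns F of Σ(T) in staircase form: column f_j vanishes below row a_j, is nonzero
   at a_j, and above a_j only has entries of the opposite sign, at least one of them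
   nonzero because the vertex partition puts f_j with the opposite sign in some member
   of A. Solving the left-kernel equations column by column shows that a kernel vector
   is determined by its first coordinate and is positive when that coordinate is;
   since there are more rows than columns, the kernel is a line spanned by a positive
   vector. *)

From Pilot Require Import Defs.
From HB Require Import structures.
From mathcomp Require Import all_boot all_order all_algebra.
From mathcomp Require Import reals trigo.
From mathcomp Require Import lra ring.
(* Re-exported after MathComp, whose [sval] notation would otherwise shadow [Defs.sval]. *)
Import Defs.
Set Implicit Arguments. Unset Strict Implicit. Unset Printing Implicit Defensive.

Section LinearExtension.
Variable E : finType.
Implicit Types P lt : rel E.

Lemma spo_neq P u v : strict_partial_order P -> P u v -> u != v.
Proof. by move=> [irr _] Puv; apply: contraTneq Puv => ->; rewrite (negbTE (irr v)). Qed.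

Lemma spo_asym P u v : strict_partial_order P -> P u v -> ~~ P v u.
Proof.
move=> [irr tr] Puv; apply/negP => /(tr _ _ _ Puv).
by rewrite (negbTE (irr u)).
Qed.

Lemma extends_trans lt P Q : extends lt Q -> extends Q P -> extends lt P.
Proof. by move=> ltQ QP u v /QP/ltQ. Qed.

Lemma linear_extension P : strict_partial_order P ->
  exists lt, strict_total_order lt /\ extends lt P.
Proof.
move=> [irr tr].
pose rk e := #|[set x | P x e]|.
exists (fun e f => (rk e < rk f) || ((rk e == rk f) && (enum_rank e < enum_rank f))).
split; [split; [split|]|].
- by move=> e; rewrite ltnn eqxx ltnn.
- move=> e f g /orP[h1|/andP[/eqP h1 h1']] /orP[h2|/andP[/eqP h2 h2']].
  + by rewrite (ltn_trans h1 h2).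
  + by rewrite -h2 h1.
  + by rewrite h1 h2.
  + by rewrite h1 h2 eqxx (ltn_trans h1' h2') orbT.
- move=> e f ne; case: (ltngtP (rk e) (rk f)) => [h|h|h]; rewrite ?h ?orbT //=.
  case: (ltngtP (enum_rank e) (enum_rank f)) => // /val_inj/enum_rank_inj eef.
  by rewrite eef eqxx in ne.
- move=> e f Pef; apply/orP; left; apply: proper_card; apply/properP; split.
  + by apply/subsetP => x; rewrite !inE => Pxe; apply: tr Pxe Pef.
  + by exists e; rewrite !inE // (negbTE (irr e)).
Qed.

(* The transitive closure of [P] together with the pair [(x, y)]. *)
Definition add_pair P x y : rel E :=
  fun u v => P u v || (((u == x) || P u x) && ((y == v) || P y v)).

Lemma add_pair_spo P x y : strict_partial_order P -> x != y -> ~~ P y x ->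
  strict_partial_order (add_pair P x y).
Proof.
move=> [irr tr] nxy nPyx.
have below_x_above_y u : (u == x) || P u x -> (y == u) || P y u -> False.
  case/orP => [/eqP->|Pux]; case/orP => [/eqP yu|Pyu].
  - by rewrite yu eqxx in nxy.
  - by rewrite Pyu in nPyx.
  - by rewrite yu Pux in nPyx.
  - by rewrite (tr _ _ _ Pyu Pux) in nPyx.
split.
- move=> u; rewrite /add_pair (negbTE (irr u)) /=.
  by apply/negP => /andP[/below_x_above_y].
- have le_x a b : (a == x) || P a x -> P b a -> (b == x) || P b x.
    by case/orP => [/eqP->|h] h'; rewrite ?h' ?orbT // (tr _ _ _ h' h) orbT.
  have ge_y a b : (y == a) || P y a -> P a b -> (y == b) || P y b.
    by case/orP => [/eqP->|h] h'; rewrite ?h' ?orbT // (tr _ _ _ h h') orbT.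
  move=> u v w; rewrite /add_pair.
  case/orP => [h1|/andP[h1 h1']]; case/orP => [h2|/andP[h2 h2']].
  + by rewrite (tr _ _ _ h1 h2).
  + by rewrite (le_x _ _ h2 h1) h2' orbT.
  + by rewrite h1 (ge_y _ _ h1' h2) orbT.
  + by case: (below_x_above_y _ h2 h1').
Qed.

Lemma add_pair_extends P x y : extends (add_pair P x y) P.
Proof. by move=> u v Puv; rewrite /add_pair Puv. Qed.

Lemma linear_extension_with P x y : strict_partial_order P -> x != y -> ~~ P y x ->
  exists lt, [/\ strict_total_order lt, extends lt P & lt x y].
Proof.
move=> sP nxy nPyx; have [lt [tot ext]] := linear_extension (add_pair_spo sP nxy nPyx).
exists lt; split => //; first exact: extends_trans ext (@add_pair_extends P x y).
by apply: ext; rewrite /add_pair !eqxx orbT.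
Qed.

Definition between lt x m y := (lt x m && lt m y) || (lt y m && lt m x).

Lemma betweenC lt x m y : between lt x m y = between lt y m x.
Proof. exact: orbC. Qed.

Lemma between_lt_eq lt x m y : strict_partial_order lt -> between lt x m y ->
  lt x m = lt m y.
Proof.
move=> slt /orP[/andP[-> ->] //|/andP[lym lmx]].
by rewrite (negbTE (spo_asym slt lmx)) (negbTE (spo_asym slt lym)).
Qed.

(* If [x] and [m] were incomparable, [m] could be put on either side of [x], and
   [y] then placed so as to violate betweenness. *)
Lemma between_comparable P x m y : strict_partial_order P ->
  (forall lt, strict_total_order lt -> extends lt P -> between lt x m y) ->
  x != m -> m != y -> P x m || P m x.
Proof.
move=> sP btw nxm nmy; apply/negPn/negP; rewrite negb_or => /andP[nPxm nPmx].
have nmx : m != x by rewrite eq_sym.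
have nym : y != m by rewrite eq_sym.
have [Pmy|nPmy] := boolP (P m y).
  have [lt [tot ext lmx]] := linear_extension_with sP nmx nPxm.
  have /(between_lt_eq tot.1) := btw lt tot ext.
  by rewrite (negbTE (spo_asym tot.1 lmx)) ext.
have nP'my : ~~ add_pair P x m m y.
  by rewrite /add_pair (negbTE nPmy) (negbTE nmx) (negbTE nPmx).
have [lt [tot ext lym]] :=
  linear_extension_with (add_pair_spo sP nxm nPmx) nym nP'my.
have lxm : lt x m by apply: ext; rewrite /add_pair !eqxx orbT.
have /(between_lt_eq tot.1) := btw lt tot (extends_trans ext (@add_pair_extends P x m)).
by rewrite lxm (negbTE (spo_asym tot.1 lym)).
Qed.

End LinearExtension.

Import Order.TTheory GRing.Theory Num.Theory.
Local Open Scope ring_scope.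

Section CircuitChain.
Variable E : finType.
Implicit Types (P lt : rel E) (a : signed E).

Lemma circuit_tot_between lt a x m y : x != y ->
  (a = ([set x; y], [set m]) \/ a = ([set m], [set x; y])) ->
  circuit_tot lt a -> between lt x m y.
Proof.
move=> nxy ha [g1 [g2 [g3 [l12 l23 hg]]]].
have ends : [set x; y] = [set g1; g3] -> m = g2 -> between lt x m y.
  move=> exy ->; have : x \in [set g1; g3] by rewrite -exy setU11.
  have : y \in [set g1; g3] by rewrite -exy !inE eqxx orbT.
  rewrite !inE => /orP[]/eqP yg /orP[]/eqP xg; subst x y;
    rewrite /between ?l12 ?l23 ?orbT //; by rewrite eqxx in nxy.
have not_single z : [set x; y] != [set z].
  apply: contra nxy => /eqP exy.
  have /set1P -> : x \in [set z] by rewrite -exy setU11.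
  by have /set1P -> : y \in [set z] by rewrite -exy !inE eqxx orbT.
case: ha hg => -> [] [] exy em.
- by apply: ends => //; apply/set1_inj.
- by case/eqP: (not_single g2).
- by case/eqP: (not_single g2); rewrite em.
- by apply: ends => //; apply/set1_inj.
Qed.

Lemma circuit_po_chain P a : strict_partial_order P -> circuit_po P a ->
  exists x m y, [/\ P x m, P m y &
    a = ([set x; y], [set m]) \/ a = ([set m], [set x; y])].
Proof.
move=> sP ca; have [lt0 [tot0 ext0]] := linear_extension sP.
have [x [m [y [lxm lmy ha]]]] := ca _ tot0 ext0.
have nxm := spo_neq tot0.1 lxm; have nmy := spo_neq tot0.1 lmy.
have nxy := spo_neq tot0.1 (tot0.1.2 _ _ _ lxm lmy).
have btw lt : strict_total_order lt -> extends lt P -> between lt x m y.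
  by move=> tot ext; apply: circuit_tot_between nxy ha (ca lt tot ext).
have cmp_xm := between_comparable sP btw nxm nmy.
have cmp_ym : P y m || P m y.
  apply: between_comparable sP _ (_ : y != m) (_ : m != x); rewrite 1?eq_sym //.
  by move=> lt tot ext; rewrite betweenC; apply: btw.
have [lt [tot ext]] := linear_extension sP.
have /(between_lt_eq tot.1) := btw lt tot ext.
case/orP: cmp_xm => [Pxm|Pmx]; case/orP: cmp_ym => [Pym|Pmy].
- by rewrite ext // => /esym; rewrite (negbTE (spo_asym tot.1 (ext _ _ Pym))).
- by exists x, m, y.
- by exists y, m, x; rewrite [[set y; x]]setUC.
- by rewrite (ext _ _ Pmy) (negbTE (spo_asym tot.1 (ext _ _ Pmx))).
Qed.

Lemma circuit_po_supp P a : strict_partial_order P -> circuit_po P a ->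
  forall e, e \in supp a ->
  exists p : E * E, (supp a == [set e; p.1; p.2]) && P p.1 p.2.
Proof.
move=> sP /(circuit_po_chain sP) [x [m [y [Pxm Pmy ha]]]] e.
have -> : supp a = [set x; m; y].
  apply/setP => z; case: ha => ->; rewrite !inE;
    by case: (z == x); case: (z == m); case: (z == y).
rewrite !inE => /orP[/orP[]|] /eqP ->.
- by exists (m, y); rewrite Pmy andbT.
- exists (x, y); rewrite (sP.2 _ _ _ Pxm Pmy) andbT; apply/eqP/setP => z.
  by rewrite !inE; case: (z == x); case: (z == m); case: (z == y).
- exists (x, m); rewrite Pxm andbT; apply/eqP/setP => z.
  by rewrite !inE; case: (z == x); case: (z == m); case: (z == y).
Qed.

Lemma circuit_po_sval_neg P a e : strict_partial_order P -> circuit_po P a ->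
  e \in a.2 -> sval a e = -1.
Proof.
move=> sP /(circuit_po_chain sP) [x [m [y [Pxm Pmy ha]]]].
have nxm := spo_neq sP Pxm; have nmy := spo_neq sP Pmy.
rewrite /sval; case: ha => -> /=; rewrite !inE.
- by move/eqP->; rewrite eq_sym (negbTE nxm) (negbTE nmy) eqxx.
- by case/orP => /eqP->; rewrite ?(negbTE nxm) 1?[y == m]eq_sym ?(negbTE nmy) eqxx ?orbT.
Qed.

End CircuitChain.

Section SignedSets.
Variable E : finType.

Lemma sval_eq0 (X : signed E) e : (sval X e == 0) = (e \notin supp X).
Proof. by rewrite /sval /supp inE; case: (e \in X.1); case: (e \in X.2). Qed.

Lemma mem_compose_seq1 (s : seq (signed E)) e :
  e \in (compose_seq s).1 -> exists2 X, X \in s & e \in X.1.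
Proof.
elim: s => [|X s IH] /=; first by rewrite inE.
rewrite !inE => /orP[eX|/andP[_ /IH [Y Ys eY]]]; first by exists X; rewrite ?mem_head.
by exists Y; rewrite // inE Ys orbT.
Qed.

Lemma mem_compose_seq2 (s : seq (signed E)) e :
  e \in (compose_seq s).2 -> exists2 X, X \in s & e \in X.2.
Proof.
elim: s => [|X s IH] /=; first by rewrite inE.
rewrite !inE => /orP[eX|/andP[_ /IH [Y Ys eY]]]; first by exists X; rewrite ?mem_head.
by exists Y; rewrite // inE Ys orbT.
Qed.

End SignedSets.

Section VertexPartition.
Variables (V E : finType) (src dst : E -> V) (A : {set signed E}).
Hypothesis partA : vertex_partition src dst A.

(* [e] is positive in the vertex cocircuit of its head, negative in that of its tail. *)
Lemma vertex_partition_mem e :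
  (exists2 b, b \in A & e \in b.1) /\ (exists2 b, b \in A & e \in b.2).
Proof.
have [part Hpart] := partA; split.
- have [_ Cdst] := Hpart (dst e).
  have : e \in (Cstar src dst (dst e)).1 by rewrite inE.
  rewrite -Cdst => /mem_compose_seq1 [X]; rewrite mem_enum inE => /andP[XA _] eX.
  by exists X.
- have [_ Csrc] := Hpart (src e).
  have : e \in (Cstar src dst (src e)).2 by rewrite inE.
  rewrite -Csrc => /mem_compose_seq2 [X]; rewrite mem_enum inE => /andP[XA _] eX.
  by exists X.
Qed.

Lemma vertex_partition_opposite_sign (prec : rel E) :
  strict_partial_order prec -> (forall b, b \in A -> circuit_po prec b) ->
  forall (X : signed E) e, sval X e != 0 -> exists2 b, b \in A & sval b e = - sval X e.
Proof.
move=> sprec circA X e; have [[b1 b1A eb1] [b2 b2A eb2]] := vertex_partition_mem e.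
rewrite [sval X e]/sval; case: (e \in X.1); last case: (e \in X.2) => // _.
- by exists b2; rewrite // (circuit_po_sval_neg sprec (circA _ b2A) eb2).
- by exists b1; rewrite // /sval eb1.
Qed.

End VertexPartition.

Lemma sin_deg_gt0 (R : realType) (x : R) : 0 < x < 180 -> 0 < sin_deg x.
Proof.
move=> /andP[x_gt0 x_lt180]; apply: sin_gt0_pi; have pi_gt0 := pi_gt0 R.
rewrite divr_gt0 ?mulr_gt0 //= ltr_pdivrMr //; nra.
Qed.

Section SigmaEntries.
Variables (R : realType) (E : finType) (prec : rel E) (theta : E -> R).
Hypotheses (sprec : strict_partial_order prec) (theta_prec : respects prec theta).

Lemma Sigma_entry_sign (a : signed E) e : circuit_po prec a ->
  exists2 w, 0 < w & Sigma_entry prec theta a e = (sval a e)%:~R * w.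
Proof.
move=> ca; rewrite /Sigma_entry; case: ifP => [e_supp|/negbFE e_supp].
  by move: e_supp; rewrite -sval_eq0 => /eqP->; exists 1; rewrite ?mul0r.
case: pickP => [[e' e''] /andP[_ /= prec_e] | no_pick]; last first.
  by have [p] := circuit_po_supp sprec ca e_supp; rewrite no_pick.
exists (sin_deg (theta e'' - theta e')) => //; apply: sin_deg_gt0.
have [theta_range theta_mono] := theta_prec.
have := theta_mono _ _ prec_e; have := theta_range e'; have := theta_range e''.
by move=> /andP[? ?] /andP[? ?] ?; apply/andP; split; lra.
Qed.

End SigmaEntries.

Lemma Sigma_on_entry (R : realType) (E : finType) (prec : rel E) (A : {set signed E})
    (theta : E -> R) (F : {set E}) i k :
  Sigma_on prec A theta F i k = Sigma_entry prec theta (enum_val i) (enum_val k).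
Proof. by rewrite /Sigma_on /Sigma !mxE enum_rankK. Qed.

Section Staircase.
Variables (R : realFieldType) (n : nat) (M : 'M[R]_(n.+1, n)).
Local Notation piv j := (@lift n.+1 ord0 j).
Hypotheses
  (pivot_neq0 : forall j : 'I_n, M (piv j) j != 0)
  (below_pivot_eq0 : forall (j : 'I_n) (i : 'I_n.+1), (piv j < i)%N -> M i j = 0)
  (above_pivot_sign : forall (j : 'I_n) (i : 'I_n.+1), (i < piv j)%N ->
     M i j * M (piv j) j <= 0)
  (above_pivot_neq0 : forall j : 'I_n, exists2 i : 'I_n.+1, (i < piv j)%N & M i j != 0).

Lemma staircase_column (d : 'rV[R]_n.+1) (j : 'I_n) : d *m M = 0 ->
  d 0 (piv j) * M (piv j) j = - \sum_(i < n.+1 | (i < piv j)%N) d 0 i * M i j.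
Proof.
move/rowP/(_ j); rewrite !mxE (bigID (fun i : 'I_n.+1 => (i < piv j)%N)) /=.
rewrite (bigD1 (piv j) (P := fun i : 'I_n.+1 => ~~ (i < piv j)%N)) ?ltnn //=.
rewrite [X in _ + (_ + X) = _]big1 => [|i].
  by rewrite addr0 addrC => /eqP; rewrite addr_eq0 => /eqP.
rewrite -leqNgt => /andP[le_piv_i ne_i_piv]; rewrite below_pivot_eq0 ?mulr0 //.
by rewrite ltn_neqAle le_piv_i andbT eq_sym; apply: contra ne_i_piv => /eqP/val_inj->.
Qed.

Lemma staircase_row_ind (Q : 'I_n.+1 -> Prop) : Q ord0 ->
  (forall j : 'I_n, (forall i : 'I_n.+1, (i < piv j)%N -> Q i) -> Q (piv j)) ->
  forall i, Q i.
Proof.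
move=> Q0 Qpiv; suff Q_lt k (i : 'I_n.+1) : (i < k)%N -> Q i by move=> i; apply: (Q_lt i.+1).
elim: k i => // k IH i; rewrite ltnS leq_eqVlt => /orP[/eqP ik | /IH //]; subst k.
by case: (unliftP ord0 i) IH => [j -> IH|-> //]; apply: Qpiv => i' /IH.
Qed.

Lemma staircase_kernel_eq0 (d : 'rV[R]_n.+1) : d *m M = 0 -> d 0 ord0 = 0 -> d = 0.
Proof.
move=> dM d0; apply/rowP; apply: staircase_row_ind => [|j IH]; rewrite mxE //.
have /eqP := staircase_column j dM; rewrite big1 => [|i /IH ->]; last by rewrite mxE mul0r.
by rewrite oppr0 mulf_eq0 (negbTE (pivot_neq0 j)) orbF => /eqP.
Qed.

(* Multiplied by the pivot, column [j]'s equation has only nonnegative terms on the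
   right and a positive one among them. *)
Lemma staircase_kernel_gt0 (d : 'rV[R]_n.+1) : d *m M = 0 -> 0 < d 0 ord0 ->
  forall i, 0 < d 0 i.
Proof.
move=> dM d0; apply: staircase_row_ind => // j IH.
have [i0 lt_i0 Mi0] := above_pivot_neq0 j.
set p := M (piv j) j.
have term_ge0 (i : 'I_n.+1) : (i < piv j)%N -> 0 <= - (d 0 i * M i j * p).
  by move=> lt_i; rewrite -mulrA oppr_ge0 pmulr_rle0 ?above_pivot_sign ?IH.
have term_gt0 : 0 < - (d 0 i0 * M i0 j * p).
  rewrite -mulrA oppr_gt0 pmulr_rlt0 ?IH // lt_neqAle above_pivot_sign // andbT.
  by rewrite mulf_neq0 ?pivot_neq0.
have : 0 < d 0 (piv j) * p * p.
  rewrite staircase_column // mulNr mulr_suml -sumrN (bigD1 i0) //=.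
  by rewrite ltr_wpDr // sumr_ge0 // => i /andP[/term_ge0].
by rewrite -mulrA pmulr_lgt0 // -expr2 exprn_even_gt0 //= pivot_neq0.
Qed.

Lemma staircase_left_kernel :
  exists2 c : 'rV[R]_n.+1, (forall i, 0 < c 0 i) /\ c *m M = 0 &
    forall d : 'rV[R]_n.+1, d *m M = 0 -> exists k : R, d = k *: c.
Proof.
have kerM : kermx M != 0.
  by rewrite -mxrank_eq0 mxrank_ker subn_eq0 -ltnNge ltnS rank_leq_col.
have [i kerM_i] : exists i, row i (kermx M) != 0.
  apply/existsP; apply: contraR kerM => /existsPn row_eq0.
  by apply/eqP/row_matrixP => i; rewrite row0; apply/eqP/negbNE.
set d := row i (kermx M).
have dM : d *m M = 0 by rewrite -row_mul mulmx_ker row0.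
have d0 : d 0 ord0 != 0.
  by apply: contra kerM_i => /eqP/(staircase_kernel_eq0 dM)/eqP.
set c := (d 0 ord0)^-1 *: d.
have cM : c *m M = 0 by rewrite -scalemxAl dM scaler0.
have c0 : c 0 ord0 = 1 by rewrite mxE mulVf.
exists c; first by split => //; apply: staircase_kernel_gt0; rewrite ?c0 ?ltr01.
move=> e eM; exists (e 0 ord0); apply/eqP; rewrite -subr_eq0; apply/eqP.
apply: staircase_kernel_eq0; first by rewrite mulmxBl -scalemxAl eM cM scaler0 subr0.
have -> : (e - e 0 ord0 *: c) 0 ord0 = e 0 ord0 - e 0 ord0 * c 0 ord0 by rewrite !mxE.
by rewrite c0 mulr1 subrr.
Qed.

End Staircase.

Lemma simplex_reindex (R : realType) m l p q (M : 'M[R]_(p, q))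
    (g : 'I_m -> 'I_p) (h : 'I_l -> 'I_q) :
  bijective g -> bijective h -> simplex (\matrix_(i, j) M (g i) (h j)) -> simplex M.
Proof.
move=> gbij hbij [m_eq [c [c_gt0 cN] c_uniq]].
have [g' gK g'K] := gbij; have [h' _ h'K] := hbij.
set N := \matrix_(i, j) M (g i) (h j) in cN c_uniq.
split.
  by rewrite -(card_ord p) -(bij_eq_card gbij) -(card_ord q) -(bij_eq_card hbij) !card_ord.
pose pull (d : 'rV[R]_p) : 'rV[R]_m := \row_i d 0 (g i).
have pullM d j : (pull d *m N) 0 j = (d *m M) 0 (h j).
  rewrite !mxE (reindex g) /=; last exact: onW_bij.
  by apply: eq_bigr => i _; rewrite !mxE.
have pull_ker d : (d *m M == 0) = (pull d *m N == 0).
  apply/eqP/eqP => dM; apply/rowP => k; first by rewrite pullM dM !mxE.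
  by rewrite -[k]h'K -pullM dM !mxE.
exists (\row_i c 0 (g' i)).
  split => [i|]; first by rewrite mxE.
  apply/eqP; rewrite pull_ker; suff -> : pull (\row_i c 0 (g' i)) = c by rewrite cN.
  by apply/rowP => i; rewrite !mxE gK.
move=> d /eqP; rewrite pull_ker => /eqP/c_uniq [k dk]; exists k; apply/rowP => i.
by have := congr1 (fun v : 'rV_m => v 0 (g' i)) dk; rewrite !mxE g'K.
Qed.

Definition positive_pivots (E : finType) n (a : 'I_n.+1 -> signed E) (f : 'I_n -> E) :=
  forall j : 'I_n, let J := lift ord0 j in
  [/\ sval (a J) (f j) != 0,
      forall i : 'I_n.+1, (J < i)%N -> sval (a i) (f j) = 0 &
      forall i : 'I_n.+1, (i < J)%N -> sval (a i) (f j) \in [:: 0; - sval (a J) (f j)]].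

Section SignPattern.
Variables (R : realFieldType) (E : finType) (n : nat).
Variables (a : 'I_n.+1 -> signed E) (f : 'I_n -> E) (M : 'M[R]_(n.+1, n)).
Hypotheses (pivots : positive_pivots a f)
  (M_sign : forall i j, exists2 w, 0 < w & M i j = (sval (a i) (f j))%:~R * w)
  (opposite : forall j, exists t, sval (a t) (f j) = - sval (a (lift ord0 j)) (f j)).

Lemma sign_pattern_neq0 i j : (M i j != 0) = (sval (a i) (f j) != 0).
Proof.
by have [w w_gt0 ->] := M_sign i j; rewrite mulf_eq0 negb_or intr_eq0 (gt_eqF w_gt0) andbT.
Qed.

Lemma positive_pivots_left_kernel :
  exists2 c : 'rV[R]_n.+1, (forall i, 0 < c 0 i) /\ c *m M = 0 &
    forall d : 'rV[R]_n.+1, d *m M = 0 -> exists k : R, d = k *: c.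
Proof.
apply: staircase_left_kernel => j; have [piv_neq0 below above] := pivots j.
- by rewrite sign_pattern_neq0.
- by move=> i /below; have [w _ ->] := M_sign i j => ->; rewrite mul0r.
- move=> i /above; have [w w_gt0 ->] := M_sign i j.
  have [w' w'_gt0 ->] := M_sign (lift ord0 j) j.
  rewrite !inE => /orP[]/eqP->; first by rewrite mul0r mul0r.
  set s := sval _ _.
  have -> : (- s)%:~R * w * (s%:~R * w') = - (s%:~R ^+ 2 * (w * w')) :> R.
    by rewrite intrN; ring.
  by rewrite oppr_le0 mulr_ge0 ?sqr_ge0 // ltW // mulr_gt0.
- have [t t_opp] := opposite j; exists t; last first.
    by rewrite sign_pattern_neq0 t_opp oppr_eq0.
  case: (ltngtP t (lift ord0 j)) => // [/below|/val_inj t_piv].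
    by rewrite t_opp => /eqP; rewrite oppr_eq0 (negbTE piv_neq0).
  move: t_opp piv_neq0; rewrite t_piv => /eqP; rewrite -addr_eq0 -mulr2n mulrn_eq0 /=.
  by move=> ->.
Qed.

End SignPattern.

Lemma enum_rank_in_bij (T T' : finType) (a : T -> T') (A : {set T'})
    (aA : forall s, a s \in A) :
  injective a -> A = [set a s | s in T] ->
  bijective (fun s => enum_rank_in (aA s) (a s)).
Proof.
move=> a_inj A_def; apply: inj_card_bij.
  by move=> s s' /(congr1 enum_val); rewrite !enum_rankK_in // => /a_inj.
by rewrite card_ord A_def card_imset.
Qed.

Theorem mainTheorem15 (R : realType) (V E : finType) (src dst : E -> V)
    (prec : rel E) (A : {set signed E}) (F : {set E}) :
  twisted_graph src dst prec A ->
  positive_sequence A F ->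
  simplicial R prec A F.
Proof.
move=> [[_ sprec] _ circA _ partA] [n [a [f [a_inj A_def f_inj F_def pivots]]]].
move=> theta thetaP.
have aA s : a s \in A by rewrite A_def imset_f.
have fF j : f j \in F by rewrite F_def imset_f.
apply: (@simplex_reindex _ _ _ _ _ _ (fun s => enum_rank_in (aA s) (a s))
                                     (fun j => enum_rank_in (fF j) (f j))).
- exact: enum_rank_in_bij.
- exact: enum_rank_in_bij.
split => //; apply: (positive_pivots_left_kernel (a := a) (f := f)) => // [s j|j].
  rewrite mxE Sigma_on_entry !enum_rankK_in //.
  exact: Sigma_entry_sign (circA _ (aA s)).
have [piv_neq0 _ _] := pivots j.
have [b bA b_opp] := vertex_partition_opposite_sign partA sprec circA piv_neq0.
by move: bA; rewrite A_def => /imsetP[t _ b_t]; exists t; rewrite -b_t.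
Qed.
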